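(* Let $\mathcal{S}$ be a normal SPN over Boolean variables $X_1,\ldots,X_N$ and let $\mathcal{B}$ be the Bayesian network with ADD CPDs constructed from $\mathcal{S}$ as described in the context. Then $\Pr_{\mathcal{S}}(\mathbf{x})=\Pr_{\mathcal{B}}(\mathbf{x})$ for all assignments $\mathbf{x}$ of $X_1,\ldots,X_N$, where $\Pr_{\mathcal{B}}(\mathbf{x})=\sum_{\mathbf{h}}\Pr_{\mathcal{B}}(\mathbf{x},\mathbf{h})$ is the marginal over the observable variables, the sum ranging over joint assignments $\mathbf{h}$ of all hidden variables and $\Pr_{\mathcal{B}}(\mathbf{x},\mathbf{h})$ being the product of the CPDs of all variables of $\mathcal{B}$.
   Context: SPNs. Let $X_1,\ldots,X_N$ be Boolean variables. An SPN is a finite rooted DAG whose internal nodes are sum and product nodes, each edge $(v,u)$ out of a sum node carrying a weight $w_{v,u}\ge 0$, and whose terminal nodes are indicators $\mathbb{I}_{x_n},\mathbb{I}_{\bar x_n}$ or univariate distribution nodes over some $X_n$ with parameter $p\in[0,1]$ (value $p\mathbb{I}_{x_n}+(1-p)\mathbb{I}_{\bar x_n}$, where for an assignment $\mathbf{x}$, $\mathbb{I}_{x_n}=1$ iff $X_n$ is true and $\mathbb{I}_{\bar x_n}=1-\mathbb{I}_{x_n}$); products multiply their children's values, sum nodes take $\sum_u w_{v,u}\mathrm{val}(u)$, $f_{\mathcal{S}}(\mathbf{x})$ is the root value and $\Pr_{\mathcal{S}}(\mathbf{x})=f_{\mathcal{S}}(\mathbf{x})/\sum_{\mathbf{x}'}f_{\mathcal{S}}(\mathbf{x}')$.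 The scope of a terminal node over $X_n$ is $\{X_n\}$; an internal node's scope is the union of its children's scopes. The SPN is over $X_1,\ldots,X_N$ if the root's scope is $\{X_1,\ldots,X_N\}$. It is normal if (1) it is complete (children of each sum node have equal scopes) and decomposable (children of each product node have pairwise disjoint scopes); (2) the weights leaving each sum node are nonnegative and sum to 1; (3) every terminal node is a univariate distribution node and every sum node has scope size at least 2. Construction. From a normal SPN $\mathcal{S}$ over $X_1,\ldots,X_N$ build a Bayesian network $\mathcal{B}$: its variables are the observable variables $X_1,\ldots,X_N$ and, for each sum node $v$ with children $u_1,\ldots,u_l$, a hidden variable $H_v$ with values $\{1,\ldots,l\}$; its edges are exactly $H_v\to X$ for each sum node $v$ and each $X\in\mathrm{scope}(v)$. The CPD of $H_v$ is the decision stump $\mathcal{A}_{H_v}$: $\Pr(H_v=i)=w_{v,u_i}$. The CPD of $X$ is the ADD $\mathcal{A}_X$ obtained by taking the subgraph of $\mathcal{S}$ induced by the nodes whose scope contains $X$ (in which each product node has exactly one child), contracting every product node (connecting each of its parents to its unique child and deleting it; if it is the root, its child becomes the root), turning each sum node $v$ into an ADD node labelled $H_v$ whose $i$-th out-edge goes to the image of its $i$-th child $u_i$, and keeping each terminal node (a univariate distribution over $X$) as an ADD terminal carrying that distribution; $\Pr(X=x\mid \mathrm{Pa}(X)=\mathbf{h})$ is the probability of $x$ under the distribution at the terminal reached by following $\mathcal{A}_X$ from its root according to $\mathbf{h}$. *)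

From HB Require Import structures.
From mathcomp Require Import all_boot all_order all_algebra.
Set Implicit Arguments.
Unset Strict Implicit.
Unset Printing Implicit Defensive.
Import Order.TTheory GRing.Theory Num.Theory.
Local Open Scope ring_scope.

(* Nodes of an SPN over Boolean variables X_0..X_{N-1} (paper: X_1..X_N),
   with node identifiers in 'I_M.  Children of sum nodes are listed in
   order u_1,..,u_l together with the edge weights w_{v,u_i}. *)
Inductive node (R : Type) (N M : nat) :=
| NSum  of seq ('I_M * R)
| NProd of seq 'I_M
| NInd  of 'I_N & bool         (* indicator I_{x_n} (true) / I_{~x_n} (false) *)
| NDist of 'I_N & R.

Arguments NSum {R N M}.
Arguments NProd {R N M}.
Arguments NInd {R N M}.
Arguments NDist {R N M}.

Section SPN.
Variables (R : realFieldType) (N M : nat).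
(* An SPN is a map from node identifiers 'I_M.+1 to nodes; the root is ord0. *)
Variable S : 'I_M.+1 -> node R N M.+1.

Definition children (nd : node R N M.+1) : seq 'I_M.+1 :=
  match nd with
  | NSum cs => map fst cs
  | NProd cs => cs
  | _ => [::]
  end.

Definition sum_children (nd : node R N M.+1) : seq ('I_M.+1 * R) :=
  if nd is NSum cs then cs else [::].

Definition is_sum (nd : node R N M.+1) : bool :=
  if nd is NSum _ then true else false.

(* Scope, by structural recursion with fuel (fuel M.+1 suffices: see wf). *)
Fixpoint scope_f (k : nat) (v : 'I_M.+1) (n : 'I_N) : bool :=
  match k with
  | 0 => false
  | k'.+1 =>
    match S v with
    | NSum cs => has (fun c => scope_f k' c.1 n) cs
    | NProd cs => has (fun c => scope_f k' c n) cs
    | NInd m _ => m == n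
    | NDist m _ => m == n
    end
  end.

Definition scope (v : 'I_M.+1) (n : 'I_N) : bool := scope_f M.+1 v n.

Fixpoint val_f (k : nat) (x : {ffun 'I_N -> bool}) (v : 'I_M.+1) : R :=
  match k with
  | 0 => 0
  | k'.+1 =>
    match S v with
    | NSum cs => \sum_(c <- cs) c.2 * val_f k' x c.1
    | NProd cs => \prod_(c <- cs) val_f k' x c
    | NInd m b => if x m == b then 1 else 0
    | NDist m p => if x m then p else 1 - p
    end
  end.

Definition spn_val (x : {ffun 'I_N -> bool}) : R := val_f M.+1 x ord0.

Definition PrS (x : {ffun 'I_N -> bool}) : R :=
  spn_val x / \sum_(x' : {ffun 'I_N -> bool}) spn_val x'.

(* Well-formedness of an SPN: finite rooted DAG (node ids in a topological
   order: every child has a larger id than its parent, every non-root node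
   has a parent, so all nodes are reachable from the root ord0), internal
   nodes have (distinct) children, nonnegative weights, parameters in [0,1]. *)
Definition spn_wf : Prop :=
  (forall v c, c \in children (S v) -> (v < c)%N) /\
  (forall v : 'I_M.+1, v != ord0 -> exists u, v \in children (S u)) /\
  (forall v cs, S v = NSum cs -> cs != [::] /\ uniq (map fst cs)) /\
  (forall v cs, S v = NProd cs -> cs != [::] /\ uniq cs) /\
  (forall v cs, S v = NSum cs -> forall c, c \in cs -> 0 <= c.2) /\
  (forall v n p, S v = NDist n p -> 0 <= p <= 1).

Definition spn_over : Prop := forall n : 'I_N, scope ord0 n.

Definition complete : Prop :=
  forall v cs, S v = NSum cs ->
    forall c1 c2, c1 \in cs -> c2 \in cs -> forall n, scope c1.1 n = scope c2.1 n.

Definition decomposable : Prop :=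
  forall v cs, S v = NProd cs ->
    forall c1 c2, c1 \in cs -> c2 \in cs -> c1 != c2 ->
      forall n, ~~ (scope c1 n && scope c2 n).

Definition normal : Prop :=
  [/\ complete, decomposable,
      forall v cs, S v = NSum cs -> \sum_(c <- cs) c.2 = 1,
      forall v n b, S v <> NInd n b
    & forall v cs, S v = NSum cs -> (2 <= #|[pred n | scope v n]|)%N].

(* Hidden variables: one H_v per sum node v, with values 'I_l (0-based
   version of {1,..,l}), l = number of children of v. *)
Definition sumnode := {v : 'I_M.+1 | is_sum (S v)}.
Definition nch (v : 'I_M.+1) : nat := size (sum_children (S v)).

Definition hassign := {dffun forall s : sumnode, 'I_(nch (val s))}.

Definition h_at (h : hassign) (v : 'I_M.+1) : nat :=
  match @insub _ (fun v => is_sum (S v)) sumnode v with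
  | Some s => nat_of_ord (h s)
  | None => 0%N
  end.

Definition hidden_cpd (s : sumnode) (i : 'I_(nch (val s))) : R :=
  nth 0 (map snd (sum_children (S (val s)))) i.

(* Following the ADD A_X from its root according to h: on the subgraph of
   nodes whose scope contains X_n, a sum node v (ADD node labelled H_v)
   goes to its (h v)-th child, a product node is contracted (we go to its
   unique child whose scope contains X_n), and a terminal returns the
   parameter of its distribution over X_n. *)
Fixpoint add_walk (k : nat) (n : 'I_N) (h : hassign) (v : 'I_M.+1) : option R :=
  match k with
  | 0 => None
  | k'.+1 =>
    match S v with
    | NSum cs =>
        match nth None (map (fun c => Some c.1) cs) (h_at h v) with
        | Some c => add_walk k' n h c
        | None => None
        end
    | NProd cs =>
        match [seq c <- cs | scope c n] with
        | c :: _ => add_walk k' n h c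
        | [::] => None
        end
    | NInd _ b => Some (if b then 1 else 0)
    | NDist _ p => Some p
    end
  end.

Definition obs_cpd (n : 'I_N) (b : bool) (h : hassign) : R :=
  match add_walk M.+1 n h ord0 with
  | Some p => if b then p else 1 - p
  | None => 0
  end.

Definition PrB_joint (x : {ffun 'I_N -> bool}) (h : hassign) : R :=
  (\prod_(s : sumnode) hidden_cpd (h s)) * \prod_(n : 'I_N) obs_cpd n (x n) h.

Definition PrB (x : {ffun 'I_N -> bool}) : R :=
  \sum_(h : hassign) PrB_joint x h.

End SPN.

From mathcomp Require Import all_boot all_order all_algebra.
From mathcomp Require Import zify.
Set Implicit Arguments.
Unset Strict Implicit.
Unset Printing Implicit Defensive.
Import GRing.Theory.
Local Open Scope ring_scope.

(* Give the hidden variables the product distribution of the sum-node weights,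
   and let walk_prob v x h be the likelihood of x on scope(v) when every X_n is
   read off the leaf reached from v by following the choices h at sum nodes.
   By downward induction over the DAG, the SPN value at v equals the
   expectation of walk_prob v x.  At a sum node one conditions on H_v, which
   is independent of the walks below each child; at a product node the factors
   of the children only read hidden variables of sum nodes with scope inside
   disjoint scopes, so they are independent and the expectation factors.  At
   the root the expectation is the marginal Pr_B(x); summing over x shows that
   the SPN is already normalised, so Pr_S(x) = Pr_B(x). *)

Lemma ord_down_ind n (P : 'I_n -> Prop) :
  (forall v : 'I_n, (forall c : 'I_n, (v < c)%N -> P c) -> P v) -> forall v, P v.
Proof.
move=> IH v; suff: forall k (v : 'I_n), (n - v <= k)%N -> P v by apply; exact: leqnn.
elim=> [|k IHk] w w_le; apply: IH => c wc; first by have := ltn_ord c; lia.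
by apply: IHk; lia.
Qed.

Lemma mem_head_filter (T : eqType) (a : pred T) (s : seq T) c l :
  [seq y <- s | a y] = c :: l -> a c /\ c \in s.
Proof. by move=> F; have := mem_head c l; rewrite -F mem_filter => /andP[]. Qed.

Lemma nth_map_Some (T U : Type) (x0 : T) (f : U -> T) (s : seq U) i :
  nth None [seq Some (f u) | u <- s] i =
  if (i < size s)%N then Some (nth x0 (map f s) i) else None.
Proof. by elim: s i => [|u s IH] [|i] //=; rewrite IH. Qed.

Definition pairwise_disjoint (J : eqType) (I : Type) (r : seq J) (P : J -> pred I) :=
  {in r &, forall j1 j2, j1 != j2 -> forall i, P j1 i -> ~~ P j2 i}.

Lemma pairwise_disjoint_cons (J : eqType) (I : Type) j (r : seq J) (P : J -> pred I) :
  uniq (j :: r) -> pairwise_disjoint (j :: r) P ->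
  pairwise_disjoint r P /\ forall i, P j i -> ~~ has (P^~ i) r.
Proof.
move=> /andP[jr _] disj; split=> [j1 j2 j1r j2r|i Pji].
  by apply: disj; rewrite inE ?j1r ?j2r orbT.
apply/hasPn => j' j'r; apply: (disj j j') => //; rewrite ?inE ?eqxx ?j'r ?orbT //.
by apply: contraNneq jr => ->.
Qed.

Lemma big_has_disjoint (R : Type) (idx : R) (op : Monoid.com_law idx) (I : finType)
    (J : eqType) (r : seq J) (P : J -> pred I) (F : I -> R) :
  uniq r -> pairwise_disjoint r P ->
  \big[op/idx]_(i | has (P^~ i) r) F i = \big[op/idx]_(j <- r) \big[op/idx]_(i | P j i) F i.
Proof.
elim: r => [|j r IH] ur disj /=; first by rewrite big_nil big_pred0.
have [disj_r disj_j] := pairwise_disjoint_cons ur disj; case/andP: ur => _ ur.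
rewrite big_cons (bigID (P j)) /= -IH //; congr (op _ _); apply: eq_bigl => i.
  by case: (P j i); rewrite ?andbF.
by case Pji: (P j i); rewrite /= ?andbT // (negPf (disj_j i Pji)).
Qed.

Lemma sum_nth_pairs (R : pzSemiRingType) (T : Type) (x0 : T) (L : seq (T * R)) (F : T -> R) :
  \sum_(i < size L) nth 0 (map snd L) i * F (nth x0 (map fst L) i) = \sum_(c <- L) c.2 * F c.1.
Proof.
by rewrite (big_nth (x0, 0)) big_mkord; apply: eq_bigr => i _; rewrite !(nth_map (x0, 0)).
Qed.

Lemma sum_dffun_prod (R : comPzRingType) (I : finType) (T_ : I -> finType)
    (F : forall i, T_ i -> R) :
  \sum_(h : {dffun forall i, T_ i}) \prod_i F i (h i) = \prod_i \sum_(t : T_ i) F i t.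
Proof.
pose P_ i := [ffun t => F i t].
rewrite (reindex (@dffun_of_fprod I T_)); last exact/onW_bij/dffun_of_fprod_bij.
transitivity (\sum_(t : fprod T_) \prod_(i in I) P_ i (t i)).
  by apply: eq_bigr => t _; apply: eq_bigr => i _; rewrite !ffunE.
rewrite big_fprod -(bigA_distr_big_dep _ (fun i j => untag 0 (P_ i) j)).
apply: eq_bigr => i _; rewrite -(big_tag P_).
by apply: eq_bigr => t _; rewrite ffunE.
Qed.

Section ProductExpectation.
Variables (R : comPzRingType) (I : finType) (T_ : I -> finType).
Variable W : forall i, T_ i -> R.
Local Notation H := {dffun forall i, T_ i}.

Definition weight (h : H) : R := \prod_(i : I) W (h i).
Definition expect (F : H -> R) : R := \sum_h weight h * F h.
Definition depends_on (T : Type) (F : H -> T) (P : pred I) : Prop :=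
  forall h1 h2 : H, (forall i, P i -> h1 i = h2 i) -> F h1 = F h2.

Lemma eq_expect F G : F =1 G -> expect F = expect G.
Proof. by move=> FG; apply: eq_bigr => h _; rewrite FG. Qed.

Lemma expect_sum (J : Type) (r : seq J) (F : J -> H -> R) :
  expect (fun h => \sum_(j <- r) F j h) = \sum_(j <- r) expect (F j).
Proof. by rewrite /expect exchange_big; apply: eq_bigr => h _; rewrite mulr_sumr. Qed.

Hypothesis sumW1 : forall i, \sum_(t : T_ i) W t = 1.

Lemma sum_weight : \sum_h weight h = 1.
Proof. by rewrite sum_dffun_prod big1. Qed.

Lemma expect_cst c : expect (fun _ => c) = c.
Proof. by rewrite /expect -mulr_suml sum_weight mul1r. Qed.

Definition splice (P : pred I) (h1 h2 : H) : H :=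
  [ffun i => if P i then h1 i else h2 i].

Lemma spliceK P : cancel (fun p : H * H => (splice P p.1 p.2, splice P p.2 p.1))
                         (fun p : H * H => (splice P p.1 p.2, splice P p.2 p.1)).
Proof. by move=> [h1 h2]; congr pair; apply/ffunP => i; rewrite !ffunE; case: (P i). Qed.

Lemma weight_splice P h1 h2 :
  weight (splice P h1 h2) * weight (splice P h2 h1) = weight h1 * weight h2.
Proof.
rewrite /weight -!big_split; apply: eq_bigr => i _ /=; rewrite !ffunE.
by case: (P i); rewrite // mulrC.
Qed.

Lemma expectM_indep (P1 P2 : pred I) (F1 F2 : H -> R) :
  (forall i, P1 i -> ~~ P2 i) -> depends_on F1 P1 -> depends_on F2 P2 ->
  expect (fun h => F1 h * F2 h) = expect F1 * expect F2.
Proof.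
move=> disj dF1 dF2; rewrite /expect mulr_suml.
under [RHS]eq_bigr do rewrite mulr_sumr.
rewrite pair_big /= (reindex_inj (can_inj (spliceK P1))) /=.
transitivity (\sum_(p : H * H) weight p.1 * (F1 p.1 * F2 p.1) * weight p.2).
  rewrite -(pair_big predT predT (fun h1 h2 : H => weight h1 * (F1 h1 * F2 h1) * weight h2)).
  apply: eq_bigr => h1 _ /=.
  by rewrite -mulr_sumr sum_weight mulr1.
apply: eq_bigr => -[h1 h2] _ /=.
have -> : F1 (splice P1 h1 h2) = F1 h1 by apply: dF1 => i P1i; rewrite ffunE P1i.
have -> : F2 (splice P1 h2 h1) = F2 h1.
  by apply: dF2 => i P2i; rewrite ffunE; case: ifP => // /disj; rewrite P2i.
by rewrite mulrACA weight_splice mulrAC.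
Qed.

Lemma expect_prod_indep (J : eqType) (r : seq J) (F : J -> H -> R) (P : J -> pred I) :
  uniq r -> (forall j, j \in r -> depends_on (F j) (P j)) -> pairwise_disjoint r P ->
  expect (fun h => \prod_(j <- r) F j h) = \prod_(j <- r) expect (F j).
Proof.
elim: r => [|j r IH] ur dF disj.
  by under eq_expect do rewrite big_nil; rewrite big_nil expect_cst.
have [disj_r disj_j] := pairwise_disjoint_cons ur disj; case/andP: ur => _ ur.
have dF_r j' : j' \in r -> depends_on (F j') (P j') by move=> j'r; apply: dF; rewrite inE j'r orbT.
under eq_expect do rewrite big_cons.
rewrite big_cons (@expectM_indep (P j) (fun i => has (P^~ i) r)) ?IH //.
- by apply: dF; rewrite inE eqxx.
- move=> h1 h2 eq_h; apply: eq_big_seq => j' j'r; apply: (dF_r j') => // i Pi.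
  by apply: eq_h; apply/hasP; exists j'.
Qed.

Lemma expect_indicator (i0 : I) (t0 : T_ i0) :
  expect (fun h => (h i0 == t0)%:R) = W t0.
Proof.
(* Tagged lets us compare t : T_ i with t0 : T_ i0. *)
pose F i (t : T_ i) := W t * (if i == i0 then (Tagged T_ t == Tagged T_ t0)%:R else 1).
transitivity (\sum_(h : H) \prod_i F i (h i)).
  apply: eq_bigr => h _; rewrite /F big_split /=; congr (_ * _).
  by rewrite (bigD1 i0) //= eqxx eq_Tagged big1 ?mulr1 // => i /negPf ->.
have sumF1 i : i != i0 -> \sum_t F i t = 1.
  by move=> /negPf ne; rewrite /F ne; under eq_bigr do rewrite mulr1.
rewrite sum_dffun_prod (bigD1 i0) //= [X in _ * X]big1 ?mulr1; last exact: sumF1.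
rewrite /F eqxx (bigD1 t0) //= eq_Tagged eqxx mulr1 big1 ?addr0 // => t /negPf ne.
by rewrite eq_Tagged /= ne mulr0.
Qed.

End ProductExpectation.

Section SPNAsExpectation.
Variables (R : realFieldType) (N M : nat) (S : 'I_M.+1 -> node R N M.+1).
Hypothesis children_gt : forall v c, c \in children (S v) -> (v < c)%N.

Local Notation depth v := (M.+1 - v)%N.
Local Notation value x v := (val_f S M.+1 x v).
Local Notation walk n h v := (add_walk M.+1 n h v).

Lemma depth_gt0 (v : 'I_M.+1) k : (depth v <= k)%N -> (0 < k)%N.
Proof. by have := ltn_ord v; lia. Qed.

Lemma child_depth (v c : 'I_M.+1) k :
  c \in children (S v) -> (depth v <= k.+1)%N -> (depth c <= k)%N.
Proof. by move=> /children_gt; have := ltn_ord c; lia. Qed.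

Lemma child_depth_max (v c : 'I_M.+1) : c \in children (S v) -> (depth c <= M)%N.
Proof. by move/child_depth; apply; rewrite leq_subr. Qed.

Lemma scope_f_fuel k1 k2 (v : 'I_M.+1) (n : 'I_N) :
  (depth v <= k1)%N -> (depth v <= k2)%N -> scope_f S k1 v n = scope_f S k2 v n.
Proof.
elim: k1 k2 v => [|k1 IH] [|k2] v d1 d2; try by move: (depth_gt0 d1) (depth_gt0 d2).
have dc c : c \in children (S v) -> (depth c <= k1)%N /\ (depth c <= k2)%N.
  by move=> cv; split; exact: child_depth cv _.
rewrite /=; case: (S v) dc => [cs|cs|m b|m p] //= dc.
- by apply: eq_in_has => c /(map_f fst)/dc[]; exact: IH.
- by apply: eq_in_has => c /dc[]; exact: IH.
Qed.

Lemma val_f_fuel k1 k2 x (v : 'I_M.+1) : (depth v <= k1)%N -> (depth v <= k2)%N ->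
  val_f S k1 x v = val_f S k2 x v.
Proof.
elim: k1 k2 v => [|k1 IH] [|k2] v d1 d2; try by move: (depth_gt0 d1) (depth_gt0 d2).
have dc c : c \in children (S v) -> (depth c <= k1)%N /\ (depth c <= k2)%N.
  by move=> cv; split; exact: child_depth cv _.
rewrite /=; case: (S v) dc => [cs|cs|m b|m p] //= dc.
- by apply: eq_big_seq => c /(map_f fst)/dc[d1c d2c]; rewrite (IH k2).
- by apply: eq_big_seq => c /dc[]; exact: IH.
Qed.

Lemma add_walk_fuel k1 k2 (n : 'I_N) (h : hassign S) (v : 'I_M.+1) :
  (depth v <= k1)%N -> (depth v <= k2)%N -> add_walk k1 n h v = add_walk k2 n h v.
Proof.
elim: k1 k2 v => [|k1 IH] [|k2] v d1 d2; try by move: (depth_gt0 d1) (depth_gt0 d2).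
have dc c : c \in children (S v) -> (depth c <= k1)%N /\ (depth c <= k2)%N.
  by move=> cv; split; exact: child_depth cv _.
rewrite /=; case: (S v) dc => [cs|cs|m b|m p] //= dc.
- rewrite (nth_map_Some ord0); case: ifP => // i_lt.
  by have [|] := dc (nth ord0 (map fst cs) (h_at h v)); [rewrite mem_nth ?size_map | exact: IH].
- case F: [seq _ <- _ | _] => [|c l] //.
  by have [_ /dc[]] := mem_head_filter F; exact: IH.
Qed.

Lemma scopeE (v : 'I_M.+1) (n : 'I_N) : scope S v n =
  match S v with
  | NSum cs => has (fun c => scope S c.1 n) cs
  | NProd cs => has (fun c => scope S c n) cs
  | NInd m _ | NDist m _ => m == n
  end.
Proof.
rewrite {1}/scope /=; case Sv: (S v) => [cs|cs|m b|m p] //; apply: eq_in_has => c cin.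
- by apply: scope_f_fuel; rewrite ?leq_subr // (@child_depth_max v) // Sv map_f.
- by apply: scope_f_fuel; rewrite ?leq_subr // (@child_depth_max v) // Sv.
Qed.

Lemma valueE (x : {ffun 'I_N -> bool}) (v : 'I_M.+1) : value x v =
  match S v with
  | NSum cs => \sum_(c <- cs) c.2 * value x c.1
  | NProd cs => \prod_(c <- cs) value x c
  | NInd m b => if x m == b then 1 else 0
  | NDist m p => if x m then p else 1 - p
  end.
Proof.
rewrite [LHS]/=; case Sv: (S v) => [cs|cs|m b|m p] //; apply: eq_big_seq => c cin.
- by rewrite (@val_f_fuel M M.+1) ?leq_subr // (@child_depth_max v) // Sv map_f.
- by apply: val_f_fuel; rewrite ?leq_subr // (@child_depth_max v) // Sv.
Qed.

Lemma h_atE (h : hassign S) (s : sumnode S) : h_at h (val s) = h s.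
Proof. by rewrite /h_at valK. Qed.

Lemma h_at_lt (h : hassign S) (v : 'I_M.+1) cs : S v = NSum cs -> (h_at h v < size cs)%N.
Proof.
move=> Sv; rewrite /h_at; case: insubP => [s _ vs|]; last by rewrite Sv.
have size_cs : nch S (val s) = size cs by rewrite /nch vs Sv.
by rewrite -size_cs.
Qed.

Lemma walkE (n : 'I_N) (h : hassign S) (v : 'I_M.+1) : walk n h v =
  match S v with
  | NSum cs => walk n h (nth ord0 (map fst cs) (h_at h v))
  | NProd cs => if [seq c <- cs | scope S c n] is c :: _ then walk n h c else None
  | NInd _ b => Some (if b then 1 else 0)
  | NDist _ p => Some p
  end.
Proof.
rewrite [LHS]/=; case Sv: (S v) => [cs|cs|m b|m p] //.
- rewrite (nth_map_Some ord0) h_at_lt //; apply: add_walk_fuel; rewrite ?leq_subr //.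
  by rewrite (@child_depth_max v) // Sv /= mem_nth // size_map (h_at_lt h Sv).
- case F: [seq _ <- _ | _] => [|c l] //; have [_ cin] := mem_head_filter F.
  by apply: add_walk_fuel; rewrite ?leq_subr // (@child_depth_max v) // Sv.
Qed.

Lemma scope_child (v c : 'I_M.+1) n : c \in children (S v) -> scope S c n -> scope S v n.
Proof.
rewrite (scopeE v); case: (S v) => //= cs; last by move=> cin scn; apply/hasP; exists c.
by move=> /mapP[c' c'in ->] scn; apply/hasP; exists c'.
Qed.

Hypothesis complete_S : complete S.

Lemma scope_sum_child (v : 'I_M.+1) cs c n : S v = NSum cs -> c \in map fst cs ->
  scope S c n = scope S v n.
Proof.
move=> Sv /mapP[c1 c1in ->]; rewrite (scopeE v) Sv.
apply/idP/hasP => [scn|[c2 c2in]]; first by exists c1.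
by rewrite (complete_S Sv c1in c2in).
Qed.

Lemma walk_defined (n : 'I_N) (h : hassign S) (v : 'I_M.+1) :
  scope S v n -> exists p, walk n h v = Some p.
Proof.
elim/ord_down_ind: v => v IH; rewrite walkE.
case Sv: (S v) => [cs|cs|m b|m p] scn; [| |by eexists|by eexists].
- have cin : nth ord0 (map fst cs) (h_at h v) \in map fst cs.
    by rewrite mem_nth // size_map (h_at_lt h Sv).
  by apply: IH; [apply: children_gt; rewrite Sv | rewrite (scope_sum_child n Sv cin)].
- move: scn; rewrite (scopeE v) Sv => /hasP[c0 c0in scn].
  have : c0 \in [seq c <- cs | scope S c n] by rewrite mem_filter scn.
  case F: [seq _ <- _ | _] => [//|c l] _; have [scn' cin] := mem_head_filter F.
  by apply: IH => //; apply: children_gt; rewrite Sv.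
Qed.

Hypothesis decomposable_S : decomposable S.

Lemma prod_scope_disjoint (v : 'I_M.+1) cs : S v = NProd cs -> pairwise_disjoint cs (scope S).
Proof.
move=> Sv c1 c2 c1in c2in ne n sc1.
by have := decomposable_S Sv c1in c2in ne n; rewrite sc1.
Qed.

Lemma walk_prod_child (v : 'I_M.+1) cs c n (h : hassign S) :
  S v = NProd cs -> c \in cs -> scope S c n -> walk n h v = walk n h c.
Proof.
move=> Sv cin scn; rewrite walkE Sv.
have : c \in [seq c <- cs | scope S c n] by rewrite mem_filter scn.
case F: [seq _ <- _ | _] => [//|c' l] _; have [scn' c'in] := mem_head_filter F.
case: (c' =P c) => [-> //|/eqP ne].
by have := prod_scope_disjoint Sv c'in cin ne scn'; rewrite scn.
Qed.

(* Contains every hidden variable read by a walk from v; the bound v <= s makes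
   H_v invisible to the walks from its children. *)
Definition hidden_under (v : 'I_M.+1) (s : sumnode S) : bool :=
  (v <= val s)%N && [forall n, scope S (val s) n ==> scope S v n].

Lemma hidden_under_self (v : 'I_M.+1) (sv : is_sum (S v)) : hidden_under v (exist _ v sv).
Proof. by rewrite /hidden_under /= leqnn; apply/forallP => n; exact/implyP. Qed.

Lemma hidden_under_child (v c : 'I_M.+1) s :
  c \in children (S v) -> hidden_under c s -> hidden_under v s.
Proof.
move=> cv /andP[cs /forallP sub]; apply/andP; split.
  by rewrite (leq_trans _ cs) // ltnW // children_gt.
by apply/forallP => n; apply/implyP => /(implyP (sub n)); exact: scope_child.
Qed.

Lemma walk_depends (n : 'I_N) (v : 'I_M.+1) :
  depends_on (fun h => walk n h v) (hidden_under v).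
Proof.
elim/ord_down_ind: v => v IH h1 h2 eq_h; rewrite !(walkE n _ v).
case Sv: (S v) => [cs|cs|m b|m p] //.
- have sv : is_sum (S v) by rewrite Sv.
  have e1 := h_atE h1 (exist _ v sv); have e2 := h_atE h2 (exist _ v sv).
  rewrite /= in e1 e2; rewrite e1 e2 eq_h ?hidden_under_self //.
  set c := nth _ _ _; have cv : c \in children (S v).
    by rewrite Sv /= mem_nth // size_map -e2 (h_at_lt h2 Sv).
  by apply: IH => [|s /(hidden_under_child cv)]; [exact: children_gt | exact: eq_h].
- case F: [seq _ <- _ | _] => [//|c l]; have [_ cin] := mem_head_filter F.
  have cv : c \in children (S v) by rewrite Sv.
  by apply: IH => [|s /(hidden_under_child cv)]; [exact: children_gt | exact: eq_h].
Qed.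

Hypothesis sum_weights1 : forall v cs, S v = NSum cs -> \sum_(c <- cs) c.2 = 1.

Definition hidden_range (s : sumnode S) : finType := 'I_(nch S (val s)).

Local Notation expectH := (@expect R (sumnode S) hidden_range (fun s => @hidden_cpd R N M S s)).

Lemma hidden_cpd_sum1 (s : sumnode S) : \sum_(t : hidden_range s) hidden_cpd t = 1.
Proof.
transitivity (\sum_(c <- sum_children (S (val s))) c.2 * 1).
  by rewrite -(sum_nth_pairs ord0 _ (fun=> 1)); apply: eq_bigr => i _; rewrite mulr1.
have := valP s; case Sv: (S (val s)) => [cs| | |] //= _.
by under eq_bigr do rewrite mulr1; exact: sum_weights1 Sv.
Qed.

Definition walk_cpd (b : bool) (o : option R) : R :=
  if o is Some p then (if b then p else 1 - p) else 0.

Definition walk_prob (v : 'I_M.+1) (x : {ffun 'I_N -> bool}) (h : hassign S) : R :=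
  \prod_(n | scope S v n) walk_cpd (x n) (walk n h v).

Lemma walk_prob_depends v x : depends_on (walk_prob v x) (hidden_under v).
Proof. by move=> h1 h2 eq_h; apply: eq_bigr => n _; rewrite (walk_depends n eq_h). Qed.

Lemma expect_walk_prob_leaf x (v : 'I_M.+1) m p :
  (forall n, scope S v n = (m == n)) -> (forall n (h : hassign S), walk n h v = Some p) ->
  expectH (walk_prob v x) = walk_cpd (x m) (Some p).
Proof.
move=> scv walkv; rewrite -[RHS](expect_cst hidden_cpd_sum1); apply: eq_expect => h.
by rewrite /walk_prob (eq_bigl (pred1 m)) ?big_pred1_eq ?walkv // => n; rewrite scv eq_sym.
Qed.

Lemma value_expect_sum x (v : 'I_M.+1) cs : S v = NSum cs ->
  (forall c : 'I_M.+1, (v < c)%N -> value x c = expectH (walk_prob c x)) ->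
  value x v = expectH (walk_prob v x).
Proof.
move=> Sv IH; have sv : is_sum (S v) by rewrite Sv.
pose s : sumnode S := exist _ v sv.
pose child (j : nat) := nth ord0 (map fst (sum_children (S v))) j.
have size_cs : nch S v = size cs by rewrite /nch Sv.
have child_mem (i : hidden_range s) : child i \in map fst cs.
  by rewrite /child Sv mem_nth // size_map -size_cs.
have child_gt (i : hidden_range s) : (v < child i)%N by apply: children_gt; rewrite Sv.
have walk_probE h :
    walk_prob v x h = \sum_(i : hidden_range s) (h s == i)%:R * walk_prob (child i) x h.
  rewrite (bigD1 (h s)) //= eqxx mul1r big1 ?addr0 => [|i /negPf]; last first.
    by rewrite eq_sym => ->; rewrite mul0r.
  apply: eq_big => [n|n _]; first by rewrite (scope_sum_child n Sv (child_mem (h s))).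
  by rewrite walkE /child Sv (h_atE h s).
rewrite (eq_expect _ walk_probE) expect_sum.
transitivity (\sum_(i : hidden_range s) hidden_cpd i * value x (child i)).
  by rewrite (sum_nth_pairs ord0 _ (fun c => value x c)) valueE Sv.
apply: eq_bigr => i _.
rewrite (expectM_indep hidden_cpd_sum1 (P1 := pred1 s) (P2 := hidden_under (child i))).
- by rewrite (expect_indicator hidden_cpd_sum1) IH.
- by move=> s' /eqP-> ; apply/negP => /andP[]; rewrite leqNgt child_gt.
- by move=> h1 h2 eq_h /=; rewrite (eq_h s (eqxx s)).
- exact: walk_prob_depends.
Qed.

Hypothesis prod_uniq : forall v cs, S v = NProd cs -> uniq cs.
(* Without it, a sum node with empty scope would be hidden under every node and
   the children of a product would not have disjoint hidden variables. *)
Hypothesis sum_scope_nonempty : forall s : sumnode S, exists n, scope S (val s) n.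

Lemma hidden_under_prod_disjoint (v : 'I_M.+1) cs : S v = NProd cs ->
  pairwise_disjoint cs hidden_under.
Proof.
move=> Sv c1 c2 c1in c2in ne s /andP[_ /forallP sub1]; apply/negP => /andP[_ /forallP sub2].
have [n scn] := sum_scope_nonempty s.
have := prod_scope_disjoint Sv c1in c2in ne (implyP (sub1 n) scn).
by rewrite (implyP (sub2 n) scn).
Qed.

Lemma walk_prob_prod x (v : 'I_M.+1) cs h : S v = NProd cs ->
  walk_prob v x h = \prod_(c <- cs) walk_prob c x h.
Proof.
move=> Sv; rewrite /walk_prob (eq_bigl (fun n => has (scope S ^~ n) cs)) => [|n]; last first.
  by rewrite scopeE Sv.
rewrite big_has_disjoint ?(prod_uniq Sv) //; last exact: prod_scope_disjoint Sv.
apply: eq_big_seq => c cin; apply: eq_bigr => n scn.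
by rewrite (walk_prod_child h Sv cin scn).
Qed.

Lemma value_expect_prod x (v : 'I_M.+1) cs : S v = NProd cs ->
  (forall c : 'I_M.+1, (v < c)%N -> value x c = expectH (walk_prob c x)) ->
  value x v = expectH (walk_prob v x).
Proof.
move=> Sv IH; transitivity (\prod_(c <- cs) expectH (walk_prob c x)).
  by rewrite valueE Sv; apply: eq_big_seq => c cin; apply: IH; apply: children_gt; rewrite Sv.
rewrite -(expect_prod_indep hidden_cpd_sum1 (P := hidden_under) (prod_uniq Sv)).
- by apply: eq_expect => h; rewrite (walk_prob_prod x h Sv).
- by move=> c _; exact: walk_prob_depends.
- exact: hidden_under_prod_disjoint Sv.
Qed.

Lemma value_expect x (v : 'I_M.+1) : value x v = expectH (walk_prob v x).
Proof.
elim/ord_down_ind: v => v IH; case Sv: (S v) => [cs|cs|m b|m p].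
- exact: value_expect_sum Sv IH.
- exact: value_expect_prod Sv IH.
- rewrite valueE Sv (@expect_walk_prob_leaf x v m (if b then 1 else 0)) => [|n|n h].
  + by clear Sv; case: (x m); case: b; rewrite /= ?subr0 ?subrr.
  + by rewrite scopeE Sv.
  + by rewrite walkE Sv.
- rewrite valueE Sv (@expect_walk_prob_leaf x v m p) // => [n|n h].
  + by rewrite scopeE Sv.
  + by rewrite walkE Sv.
Qed.

Hypothesis over_S : spn_over S.

Lemma spn_val_expect x : spn_val S x = expectH (fun h => \prod_n obs_cpd n (x n) h).
Proof.
rewrite /spn_val value_expect; apply: eq_expect => h.
by rewrite /walk_prob (eq_bigl predT) // => n; rewrite over_S.
Qed.

Lemma sum_spn_val : \sum_x spn_val S x = 1.
Proof.
under eq_bigr do rewrite spn_val_expect.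
rewrite -expect_sum -[RHS](expect_cst hidden_cpd_sum1 1); apply: eq_expect => h.
rewrite -(bigA_distr_bigA (fun n b => obs_cpd n b h)) big1 // => n _.
have [p walk_p] := walk_defined h (over_S n).
by rewrite big_bool /obs_cpd walk_p /= subrKC.
Qed.

End SPNAsExpectation.

Theorem theorem4 (R : realFieldType) (N M : nat) (S : 'I_M.+1 -> node R N M.+1) :
  spn_wf S -> spn_over S -> normal S ->
  forall x : {ffun 'I_N -> bool}, PrS S x = PrB S x.
Proof.
move=> [children_gt [_ [_ [prod_wf _]]]] over [complete_S decomposable_S sum_weights1 _ scope2] x.
have prod_uniq v cs : S v = NProd cs -> uniq cs by case/prod_wf.
have sum_scope_nonempty (s : sumnode S) : exists n, scope S (val s) n.
  have := valP s; case Sv: (S (val s)) => [cs| | |] //= _.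
  by have /card_gt0P[n] := ltnW (scope2 _ _ Sv); exists n.
rewrite /PrS (sum_spn_val children_gt complete_S decomposable_S sum_weights1 prod_uniq
  sum_scope_nonempty over) divr1.
exact: spn_val_expect.
Qed.
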